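(* In the setting of the context, the fixed point algebra $M^A=\{m\in M: a\triangleright m=\varepsilon_A(a)m \text{ for all } a\in A\}$ equals $N$.
   Context: $k$ is a field; $C_R(S)=\{r\in R:rs=sr\ \forall s\in S\}$. $N\subseteq M$ is a strongly separable, irreducible extension of $k$-algebras: $C_M(N)=k1$ and there are an $N$-bimodule map $E:M\to N$ and $x_1,\dots,x_n,y_1,\dots,y_n\in M$ with $\sum_iE(mx_i)y_i=m=\sum_ix_iE(y_im)$ for all $m\in M$, $E(1)\neq0$, $\sum_ix_iy_i\neq0$; normalized so that $E(1)=1$, whence $\sum_ix_iy_i=\lambda^{-1}1$ with $0\neq\lambda\in k$. Basic construction: given $S\subseteq R$, an $S$-bimodule map $E_S:R\to S$ with $E_S(1)=1$ and $r_i,s_i\in R$ with $\sum_iE_S(rr_i)s_i=r=\sum_ir_iE_S(s_ir)$ and $\sum_ir_is_i=\lambda^{-1}1$, set $R_1=R\otimes_SR$ with product $(a\otimes b)(c\otimes d)=aE_S(bc)\otimes d$, unit $\sum_ir_i\otimes s_i$, $R\subseteq R_1$ via $r\mapsto\sum_irr_i\otimes s_i$, Jones idempotent $e=1\otimes1$, $E_R:R_1\to R$, $a\otimes b\mapsto\lambda ab$; then $E_R$, $\lambda^{-1}r_i\otimes1$, $1\otimes s_i$ satisfy the same conditions with the same $\lambda$. From $(N\subseteq M,E)$ get $M_1,e_1,E_M$; from $(M\subseteq M_1,E_M)$ get $M_2,e_2,E_{M_1}$. Let $A=C_{M_1}(N)$, $B=C_{M_2}(M)$, $C=C_{M_2}(N)$.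 Depth 2 is assumed: $M_1$ is free as right $M$-module with basis in $A$, $M_2$ free as right $M_1$-module with basis in $B$. Let $F=E_M\circ E_{M_1}$, with values on $C$ in $k1\cong k$. The form $\langle a,b\rangle=\lambda^{-2}F(ae_2e_1b)$ is a non-degenerate pairing $A\times B\to k$; $B$ is a Hopf algebra with $\Delta(b)=b_{(1)}\otimes b_{(2)}$ given by $\langle a,b_{(1)}\rangle\langle a',b_{(2)}\rangle=\langle aa',b\rangle$, $\varepsilon(b)=\langle1,b\rangle$, antipode determined by $E_{M_1}(be_1e_2)=E_{M_1}(e_2e_1S(b))$; $A$ is the dual Hopf algebra: $\Delta_A(a)=a_{(1)}\otimes a_{(2)}$ with $\langle a_{(1)},b\rangle\langle a_{(2)},b'\rangle=\langle a,bb'\rangle$, $\varepsilon_A(a)=\langle a,1\rangle$, $\langle S_A(a),b\rangle=\langle a,S(b)\rangle$. $M$ is a left $A$-module algebra via $a\triangleright m=a_{(1)}mS_A(a_{(2)})$ (product computed in $M_1$; the result lies in $M$). *)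

From mathcomp Require Import all_boot all_algebra.
Set Implicit Arguments. Unset Strict Implicit. Unset Printing Implicit Defensive.
Import GRing.Theory.
Local Open Scope ring_scope.

(* M_1 = M ⊗_N M is realised faithfully inside the functions M -> M via
     a ⊗ b  |->  (z |-> a * E (b * z)),
   products being composition and M ⊆ M_1 via left multiplication.
   M_2 = M_1 ⊗_M M_1 is realised inside the functions (M -> M) -> (M -> M) via
     P ⊗ Q  |->  (X |-> P ∘ L_{E_M (Q ∘ X)}),
   products being composition and M_1 ⊆ M_2 via left composition. *)

Section Tower.
Variables (k : fieldType) (M : algType k) (N : {pred M}) (E : M -> M)
  (n : nat) (x y : 'I_n -> M) (lam : k).

Definition M1T := M -> M.
Definition M2T := M1T -> M1T.

Definition lmul (m : M) : M1T := fun z => m * z.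

Definition inM1 (f : M1T) : Prop :=
  exists q (a b : 'I_q -> M), f = fun z => \sum_(i < q) a i * E (b i * z).

(* Jones idempotent e_1 = 1 ⊗ 1 *)
Definition e1 : M1T := E.

(* E_M : M_1 -> M, a ⊗ b |-> lam a b *)
Definition EM (f : M1T) : M := lam *: \sum_(i < n) f (x i) * y i.

Definition iM12 (f : M1T) : M2T := fun X => f \o X.

Definition inM2 (Phi : M2T) : Prop :=
  exists q (P Q : 'I_q -> M1T), (forall i, inM1 (P i) /\ inM1 (Q i)) /\
    Phi = fun X z => \sum_(i < q) P i (EM (Q i \o X) * z).

(* Jones idempotent e_2 = 1 ⊗ 1 in M_2 *)
Definition e2 : M2T := fun X => lmul (EM X).

(* quasi-basis of M ⊆ M_1 : lam^-1 x_i ⊗ 1 and 1 ⊗ y_i *)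
Definition qbu (i : 'I_n) : M1T := fun z => lam^-1 *: (x i * E z).
Definition qbv (i : 'I_n) : M1T := fun z => E (y i * z).

(* E_{M_1} : M_2 -> M_1, P ⊗ Q |-> lam P Q *)
Definition EM1 (Phi : M2T) : M1T :=
  fun z => lam *: \sum_(i < n) Phi (qbu i) (qbv i z).

Definition Fmap (Phi : M2T) : M := EM (EM1 Phi).

Definition inA (f : M1T) : Prop :=
  inM1 f /\ forall u, u \in N -> f \o lmul u = lmul u \o f.
Definition inB (Phi : M2T) : Prop :=
  inM2 Phi /\ forall m : M, Phi \o iM12 (lmul m) = iM12 (lmul m) \o Phi.

(* pairing <a, b> = lam^-2 F (a e_2 e_1 b), with values in k1 ⊆ M *)
Definition pairing (a : M1T) (b : M2T) : M :=
  lam ^- 2 *: Fmap (iM12 a \o e2 \o iM12 e1 \o b).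

Definition epsA (a : M1T) : M := pairing a id.

(* t = S(b) for the antipode of B *)
Definition antipodeB (b t : M2T) : Prop :=
  inB t /\ EM1 (b \o iM12 e1 \o e2) = EM1 (e2 \o iM12 e1 \o t).

(* s = S_A(a) : <S_A(a), b> = <a, S(b)> *)
Definition antipodeA (a s : M1T) : Prop :=
  inA s /\ forall b t, inB b -> antipodeB b t -> pairing s b = pairing a t.

(* Delta_A(a) = \sum_i a1 i ⊗ a2 i *)
Definition coprodA (a : M1T) q (a1 a2 : 'I_q -> M1T) : Prop :=
  (forall i, inA (a1 i) /\ inA (a2 i)) /\
  forall b b', inB b -> inB b' ->
    \sum_(i < q) pairing (a1 i) b * pairing (a2 i) b' = pairing a (b \o b').

(* m ∈ M^A : a ▷ m = a_(1) m S_A(a_(2)) equals eps_A(a) m for all a ∈ A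
   (equality in M_1, where M sits via left multiplication) *)
Definition fixedA (m : M) : Prop :=
  forall a, inA a ->
  forall q (a1 a2 : 'I_q -> M1T), coprodA a a1 a2 ->
  forall s : 'I_q -> M1T, (forall i, antipodeA (a2 i) (s i)) ->
    (fun z => \sum_(i < q) a1 i (m * s i z)) = lmul (epsA a * m).

Definition depth2 : Prop :=
  (exists p (g : 'I_p -> M1T), (forall i, inA (g i)) /\
     (forall X, inM1 X -> exists c : 'I_p -> M,
          X = fun z => \sum_(i < p) g i (c i * z)) /\
     (forall c c' : 'I_p -> M,
          (fun z => \sum_(i < p) g i (c i * z)) =
          (fun z => \sum_(i < p) g i (c' i * z)) -> forall i, c i = c' i)) /\
  (exists p (h : 'I_p -> M2T), (forall i, inB (h i)) /\
     (forall Phi, inM2 Phi -> exists c : 'I_p -> M1T, (forall i, inM1 (c i)) /\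
          Phi = fun X z => \sum_(i < p) h i (c i \o X) z) /\
     (forall c c' : 'I_p -> M1T, (forall i, inM1 (c i) /\ inM1 (c' i)) ->
          (fun X z => \sum_(i < p) h i (c i \o X) z) =
          (fun X z => \sum_(i < p) h i (c' i \o X) z) -> forall i, c i = c' i)).

End Tower.

From Pilot Require Import Defs.
From mathcomp Require Import all_boot all_algebra.
From Stdlib Require Import FunctionalExtensionality ClassicalEpsilon.
Set Implicit Arguments. Unset Strict Implicit. Unset Printing Implicit Defensive.
Import GRing.Theory.
Local Open Scope ring_scope.

(* In the concrete tower, M_1 is the algebra of right N-linear endomorphisms of M,
   so A = C_{M_1}(N) consists of the N-bimodule endomorphisms, and an element Phi of
   B = C_{M_2}(M) is determined by the bimodule map Phi e_1.  Through the pairing, the coproduct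
   of A becomes a splitting a (u * v) = \sum a_(1) u * a_(2) v and the counit becomes a |-> a 1;
   the free basis of M_2 over M_1 produces such splittings, and the free basis of M_1 over M an
   explicit antipode S.  For m in N the action is a |> m = (\sum a_(1) o S a_(2)) o m, which is
   eps(a) m by the antipode axiom.  Conversely e_1 = E lies in A, its coproduct splits E (u * v),
   and evaluating the fixed-point condition for E at 1 yields E m = m, so m lies in N. *)

Section Tower.
Variables (k : fieldType) (M : algType k) (N : {pred M}) (E : M -> M)
  (n : nat) (x y : 'I_n -> M) (lam : k).
Hypothesis HN : subalg_closed N.
Hypothesis HEN : forall m, E m \in N.
Hypothesis HEadd : forall m m', E (m + m') = E m + E m'.
Hypothesis HEl : forall u m, u \in N -> E (u * m) = u * E m.
Hypothesis HEr : forall u m, u \in N -> E (m * u) = E m * u.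
Hypothesis Hqb1 : forall m, \sum_(i < n) E (m * x i) * y i = m.
Hypothesis Hqb2 : forall m, \sum_(i < n) x i * E (y i * m) = m.
Hypothesis HE1 : E 1 = 1.
Hypothesis Hlam : lam != 0.
Hypothesis Hxy : \sum_(i < n) x i * y i = lam^-1%:A.
Hypothesis Hirr : forall m : M, (forall u, u \in N -> m * u = u * m) ->
  exists c : k, m = c%:A.

#[local] Hint Resolve HEN : core.

Lemma additive_sum (f : M -> M) : (forall a b, f (a + b) = f a + f b) ->
  forall I (r : seq I) (P : pred I) F,
  f (\sum_(i <- r | P i) F i) = \sum_(i <- r | P i) f (F i).
Proof.
move=> fD I r P F; apply: (big_morph f fD).
by apply: (addrI (f 0)); rewrite -fD !addr0.
Qed.

Lemma scalar_in_N (c : k) : c%:A \in N.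
Proof.
have [N0 Nlin] := GRing.subalg_closedZ HN.
by rewrite -[c%:A]addr0; apply: Nlin => //; case: HN.
Qed.

Lemma E_sum I (r : seq I) (P : pred I) F :
  E (\sum_(i <- r | P i) F i) = \sum_(i <- r | P i) E (F i).
Proof. exact: additive_sum. Qed.

Lemma EZ (c : k) m : E (c *: m) = c *: E m.
Proof. by rewrite -mulr_algl HEl ?scalar_in_N // mulr_algl. Qed.

Lemma sum_Ex_y : \sum_(i < n) E (x i) * y i = 1.
Proof. by rewrite -[RHS]Hqb1; apply: eq_bigr => i _; rewrite mul1r. Qed.

Lemma sum_x_Ey : \sum_(i < n) x i * E (y i) = 1.
Proof. by rewrite -[RHS]Hqb2; apply: eq_bigr => i _; rewrite mulr1. Qed.

Lemma E_faithful_r P Q : (forall q, E (P * q) = E (Q * q)) -> P = Q.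
Proof. by move=> H; rewrite -(Hqb1 P) -(Hqb1 Q); apply: eq_bigr => i _; rewrite H. Qed.

Lemma E_faithful_l P Q : (forall p, E (p * P) = E (p * Q)) -> P = Q.
Proof. by move=> H; rewrite -(Hqb2 P) -(Hqb2 Q); apply: eq_bigr => i _; rewrite H. Qed.

(** * Bimodule maps over N *)

Definition central (m : M) := forall u, u \in N -> m * u = u * m.

Definition rmodmap (f : M -> M) :=
  (forall a b, f (a + b) = f a + f b) /\ (forall u z, u \in N -> f (z * u) = f z * u).

Definition bimodmap (f : M -> M) :=
  rmodmap f /\ (forall u z, u \in N -> f (u * z) = u * f z).

Lemma bimod_rmod f : bimodmap f -> rmodmap f.
Proof. by case. Qed.
Coercion bimod_rmod : bimodmap >-> rmodmap.

Lemma centralC m z : central m -> m * z = z * m.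
Proof. by move=> /Hirr [c ->]; rewrite mulr_algl mulr_algr. Qed.

Lemma central_in_N m : central m -> m \in N.
Proof. by move=> /Hirr [c ->]; exact: scalar_in_N. Qed.

Section ModuleMapTheory.
Variable f : M -> M.

Lemma rmodD a b : rmodmap f -> f (a + b) = f a + f b.
Proof. by case=> ->. Qed.

Lemma rmodMr z u : rmodmap f -> u \in N -> f (z * u) = f z * u.
Proof. by case=> _; apply. Qed.

Lemma rmod_sum I (r : seq I) (P : pred I) F : rmodmap f ->
  f (\sum_(i <- r | P i) F i) = \sum_(i <- r | P i) f (F i).
Proof. by case=> fD _; apply: additive_sum. Qed.

Lemma rmod0 : rmodmap f -> f 0 = 0.
Proof. by move=> Hf; have := rmod_sum [::] xpredT id Hf; rewrite !big_nil. Qed.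

Lemma rmodCr m z : rmodmap f -> central m -> f (z * m) = f z * m.
Proof. by move=> Hf /Hirr [c ->]; rewrite (rmodMr _ Hf) ?scalar_in_N. Qed.

Lemma rmodZ (c : k) z : rmodmap f -> f (c *: z) = c *: f z.
Proof. by move=> Hf; rewrite -mulr_algr (rmodMr _ Hf (scalar_in_N c)) mulr_algr. Qed.

Lemma bimodMl u z : bimodmap f -> u \in N -> f (u * z) = u * f z.
Proof. by case=> _; apply. Qed.

Lemma bimodCl m z : bimodmap f -> central m -> f (m * z) = m * f z.
Proof. by move=> Hf /Hirr [c ->]; rewrite (bimodMl _ Hf) ?scalar_in_N. Qed.

Lemma central_at1 : bimodmap f -> central (f 1).
Proof. by move=> Hf u Hu; rewrite -(rmodMr _ Hf Hu) -(bimodMl _ Hf Hu) mul1r mulr1. Qed.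

Lemma rmod_expand z : rmodmap f -> f z = \sum_(i < n) f (x i) * E (y i * z).
Proof.
move=> Hf; rewrite -{1}(Hqb2 z) (rmod_sum _ _ _ Hf).
by apply: eq_bigr => i _; rewrite (rmodMr _ Hf).
Qed.

End ModuleMapTheory.

Lemma E_bimod : bimodmap E.
Proof. by split; [split; [exact: HEadd|exact: HEr]|exact: HEl]. Qed.

Lemma rmod_fsum (I : finType) (F : I -> M -> M) :
  (forall i, rmodmap (F i)) -> rmodmap (fun z => \sum_i F i z).
Proof.
move=> HF; split=> [a b|u z Hu].
  by rewrite -big_split; apply: eq_bigr => i _; rewrite (rmodD _ _ (HF i)).
by rewrite mulr_suml; apply: eq_bigr => i _; rewrite (rmodMr _ (HF i)).
Qed.

Lemma bimod_fsum (I : finType) (F : I -> M -> M) :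
  (forall i, bimodmap (F i)) -> bimodmap (fun z => \sum_i F i z).
Proof.
move=> HF; split; first by apply: rmod_fsum => i; exact: HF.
by move=> u z Hu; rewrite mulr_sumr; apply: eq_bigr => i _; rewrite (bimodMl _ (HF i)).
Qed.

Lemma bimod_comp f g : bimodmap f -> bimodmap g -> bimodmap (f \o g).
Proof.
move=> Hf Hg; split; [split=> [a b|u z Hu]|move=> u z Hu] => /=.
- by rewrite (rmodD _ _ Hg) (rmodD _ _ Hf).
- by rewrite (rmodMr _ Hg Hu) (rmodMr _ Hf Hu).
- by rewrite (bimodMl _ Hg Hu) (bimodMl _ Hf Hu).
Qed.

Lemma bimod_cmul f c : central c -> bimodmap f -> bimodmap (fun z => c * f z).
Proof.
move=> Hc Hf; split; [split=> [a b|u z Hu]|move=> u z Hu].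
- by rewrite (rmodD _ _ Hf) mulrDr.
- by rewrite (rmodMr _ Hf Hu) mulrA.
- by rewrite (bimodMl _ Hf Hu) !mulrA (centralC _ Hc).
Qed.

Lemma bimod_sub f g : bimodmap f -> bimodmap g -> bimodmap (fun z => f z - g z).
Proof.
move=> Hf Hg; split; [split=> [a b|u z Hu]|move=> u z Hu].
- by rewrite (rmodD _ _ Hf) (rmodD _ _ Hg) opprD addrACA.
- by rewrite (rmodMr _ Hf Hu) (rmodMr _ Hg Hu) mulrBl.
- by rewrite (bimodMl _ Hf Hu) (bimodMl _ Hg Hu) mulrBr.
Qed.

Lemma rmod_lmul f q : rmodmap f -> rmodmap (lmul q \o f).
Proof.
move=> Hf; split=> [a b|u z Hu]; rewrite /lmul /=; first by rewrite (rmodD _ _ Hf) mulrDr.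
by rewrite (rmodMr _ Hf Hu) mulrA.
Qed.

Lemma inM1P f : inM1 E f <-> rmodmap f.
Proof.
split=> [[q [a [b ->]]]|Hf].
  apply: rmod_fsum => i; split=> [u v|u z Hu]; first by rewrite mulrDr HEadd mulrDr.
  by rewrite mulrA HEr // mulrA.
by exists n, (fun i => f (x i)), y; apply: functional_extensionality => z; apply: rmod_expand.
Qed.

Lemma inAP f : inA N E f <-> bimodmap f.
Proof.
split=> [[/inM1P Hf Hc]|Hf]; first split => // u z Hu.
  by have /(congr1 (fun g => g z)) := Hc u Hu.
split; first by apply/inM1P; case: Hf.
by move=> u Hu; apply: functional_extensionality => z; rewrite /= /lmul (bimodMl _ Hf).
Qed.

Definition balanced (Phi : M -> M -> M) :=
  [/\ forall a b t, Phi (a + b) t = Phi a t + Phi b t,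
      forall s a b, Phi s (a + b) = Phi s a + Phi s b &
      forall s u t, u \in N -> Phi (s * u) t = Phi s (u * t)].

Section Balanced.
Variable Phi : M -> M -> M.
Hypothesis HPhi : balanced Phi.

Lemma balanced_suml t I (r : seq I) (P : pred I) F :
  Phi (\sum_(i <- r | P i) F i) t = \sum_(i <- r | P i) Phi (F i) t.
Proof. by case: HPhi => Dl _ _; apply: (@additive_sum (Phi^~ t)) => a b; apply: Dl. Qed.

Lemma balanced_sumr s I (r : seq I) (P : pred I) F :
  Phi s (\sum_(i <- r | P i) F i) = \sum_(i <- r | P i) Phi s (F i).
Proof. by case: HPhi => _ Dr _; apply: additive_sum. Qed.

(* The Casimir element [\sum_i x i (x) y i] of [M (x)_N M] commutes with [M]. *)
Lemma casimir_commute w :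
  \sum_(i < n) Phi (w * x i) (y i) = \sum_(i < n) Phi (x i) (y i * w).
Proof.
transitivity (\sum_(j < n) \sum_(i < n) Phi (x i * E (y i * (w * x j))) (y j)).
  by apply: eq_bigr => j _; rewrite -balanced_suml Hqb2.
rewrite exchange_big /=; apply: eq_bigr => i _.
rewrite -(Hqb1 (y i * w)) balanced_sumr; apply: eq_bigr => j _.
by case: HPhi => _ _ ->; rewrite ?mulrA.
Qed.

End Balanced.

(** * Traces and adjoints *)

Definition tr (g : M -> M) := \sum_(i < n) g (x i) * y i.
Definition tr' (g : M -> M) := \sum_(i < n) x i * g (y i).
Definition conv (g d : M -> M) := \sum_(i < n) g (x i) * d (y i).

(* [adjR d] and [adjL d] are the adjoints of [d] for the form [(p, q) |-> E (p * q)]. *)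
Definition adjR (d : M -> M) v := \sum_(i < n) x i * E (d (y i) * v).
Definition adjL (d : M -> M) v := \sum_(i < n) E (v * d (x i)) * y i.

Lemma id_bimod : bimodmap id.
Proof. by []. Qed.

Lemma conv_central g d : bimodmap g -> bimodmap d -> central (conv g d).
Proof.
move=> Hg Hd u Hu; rewrite /conv mulr_suml mulr_sumr.
transitivity (\sum_(i < n) g (x i) * d (y i * u)).
  by apply: eq_bigr => i _; rewrite (rmodMr _ Hd Hu) mulrA.
transitivity (\sum_(i < n) g (u * x i) * d (y i)); last first.
  by apply: eq_bigr => i _; rewrite (bimodMl _ Hg Hu) mulrA.
rewrite -(@casimir_commute (fun s t => g s * d t)) //.
split=> [a b t|s a b|s v t Hv]; first by rewrite (rmodD _ _ Hg) mulrDl.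
  by rewrite (rmodD _ _ Hd) mulrDr.
by rewrite (rmodMr _ Hg Hv) (bimodMl _ Hd Hv) mulrA.
Qed.

Lemma tr_central g : bimodmap g -> central (tr g).
Proof. by move=> Hg; apply: (conv_central Hg id_bimod). Qed.

Lemma tr'_central g : bimodmap g -> central (tr' g).
Proof. by move=> Hg; apply: (conv_central id_bimod Hg). Qed.

Lemma adjR_bimod d : bimodmap d -> bimodmap (adjR d).
Proof.
move=> Hd; split; [split=> [a b|u z Hu]|move=> u z Hu]; rewrite /adjR.
- by rewrite -big_split; apply: eq_bigr => i _; rewrite mulrDr HEadd mulrDr.
- by rewrite mulr_suml; apply: eq_bigr => i _; rewrite mulrA HEr // mulrA.
rewrite mulr_sumr.
transitivity (\sum_(i < n) x i * E (d (y i * u) * z)).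
  by apply: eq_bigr => i _; rewrite (rmodMr _ Hd Hu) mulrA.
rewrite -(@casimir_commute (fun s t => s * E (d t * z))).
  by apply: eq_bigr => i _; rewrite mulrA.
split=> [a b t|s a b|s v t Hv]; first by rewrite mulrDl.
  by rewrite (rmodD _ _ Hd) mulrDl HEadd mulrDr.
by rewrite (bimodMl _ Hd Hv) -[v * d t * z]mulrA [E (v * _)]HEl // mulrA.
Qed.

Lemma adjL_bimod d : bimodmap d -> bimodmap (adjL d).
Proof.
move=> Hd; split; [split=> [a b|u z Hu]|move=> u z Hu]; rewrite /adjL.
- by rewrite -big_split; apply: eq_bigr => i _; rewrite mulrDl HEadd mulrDl.
- rewrite mulr_suml.
  transitivity (\sum_(i < n) E (z * d (u * x i)) * y i).
    by apply: eq_bigr => i _; rewrite (bimodMl _ Hd Hu) mulrA.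
  rewrite (@casimir_commute (fun s t => E (z * d s) * t)).
    by apply: eq_bigr => i _; rewrite mulrA.
  split=> [a b t|s a b|s v t Hv]; last by rewrite (rmodMr _ Hd Hv) mulrA HEr // mulrA.
    by rewrite (rmodD _ _ Hd) mulrDr HEadd mulrDl.
  by rewrite mulrDr.
by rewrite mulr_sumr; apply: eq_bigr => i _; rewrite -mulrA HEl // mulrA.
Qed.

Lemma E_adjR d p q : bimodmap d -> E (p * adjR d q) = E (d p * q).
Proof.
move=> Hd; rewrite /adjR mulr_sumr E_sum.
transitivity (E (\sum_(i < n) E (p * x i) * d (y i) * q)).
  by rewrite E_sum; apply: eq_bigr => i _; rewrite mulrA HEr // -mulrA [E (E _ * _)]HEl.
rewrite -mulr_suml -[in RHS](Hqb1 p) (rmod_sum _ _ _ Hd).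
by congr (E (_ * q)); apply: eq_bigr => i _; rewrite (bimodMl _ Hd).
Qed.

Lemma E_adjL d p q : bimodmap d -> E (adjL d p * q) = E (p * d q).
Proof.
move=> Hd; rewrite /adjL mulr_suml E_sum.
rewrite [in RHS](rmod_expand q Hd) mulr_sumr E_sum; apply: eq_bigr => i _.
by rewrite -mulrA [E (E _ * _)]HEl // mulrA [E (_ * E _)]HEr.
Qed.

Lemma adjL_adjR d : bimodmap d -> adjL (adjR d) = d.
Proof.
move=> Hd; apply: functional_extensionality => z; apply: E_faithful_r => q.
by rewrite E_adjL ?E_adjR //; exact: adjR_bimod.
Qed.

Lemma adjR_adjL d : bimodmap d -> adjR (adjL d) = d.
Proof.
move=> Hd; apply: functional_extensionality => z; apply: E_faithful_l => p.
by rewrite E_adjR ?E_adjL //; exact: adjL_bimod.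
Qed.

Lemma adjL_E : adjL E = E.
Proof.
apply: functional_extensionality => v; rewrite /adjL -[RHS]mulr1 -sum_Ex_y mulr_sumr.
by apply: eq_bigr => i _; rewrite HEr // mulrA.
Qed.

Lemma adjR_E : adjR E = E.
Proof.
apply: functional_extensionality => v; rewrite /adjR -[RHS]mul1r -sum_x_Ey mulr_suml.
by apply: eq_bigr => i _; rewrite HEl // mulrA.
Qed.

Lemma adjLZ d (c : k) v : adjL d (c *: v) = c *: adjL d v.
Proof. by rewrite /adjL scaler_sumr; apply: eq_bigr => i _; rewrite -scalerAl EZ scalerAl. Qed.

Lemma adjR_cmul (I : finType) (c : I -> M) (F : I -> M -> M) :
  (forall i, central (c i)) ->
  adjR (fun z => \sum_i c i * F i z) = fun v => \sum_i c i * adjR (F i) v.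
Proof.
move=> Hc; apply: functional_extensionality => v; rewrite /adjR.
transitivity (\sum_(j < n) \sum_i c i * (x j * E (F i (y j) * v))).
  apply: eq_bigr => j _; rewrite mulr_suml E_sum mulr_sumr; apply: eq_bigr => i _.
  by rewrite -mulrA (HEl _ (central_in_N (Hc i))) mulrA -(centralC (x j) (Hc i)) -mulrA.
by rewrite exchange_big; apply: eq_bigr => i _; rewrite mulr_sumr.
Qed.

Lemma adjL_cmul (I : finType) (c : I -> M) (F : I -> M -> M) :
  (forall i, central (c i)) ->
  adjL (fun z => \sum_i c i * F i z) = fun v => \sum_i c i * adjL (F i) v.
Proof.
move=> Hc; apply: functional_extensionality => v; rewrite /adjL.
transitivity (\sum_(j < n) \sum_i c i * (E (v * F i (x j)) * y j)).
  apply: eq_bigr => j _; rewrite mulr_sumr E_sum mulr_suml; apply: eq_bigr => i _.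
  by rewrite mulrA -(centralC v (Hc i)) -mulrA (HEl _ (central_in_N (Hc i))) mulrA.
by rewrite exchange_big; apply: eq_bigr => i _; rewrite mulr_sumr.
Qed.

Lemma balanced_adjL Phi d : balanced Phi ->
  \sum_(i < n) Phi (d (x i)) (y i) = \sum_(i < n) Phi (x i) (adjL d (y i)).
Proof.
move=> HPhi.
transitivity (\sum_(j < n) \sum_(i < n) Phi (x i * E (y i * d (x j))) (y j)).
  by apply: eq_bigr => j _; rewrite -(balanced_suml HPhi) Hqb2.
rewrite exchange_big /=; apply: eq_bigr => i _; rewrite /adjL (balanced_sumr HPhi).
by apply: eq_bigr => j _; case: HPhi => _ _ ->.
Qed.

Lemma tr_sum (I : finType) (F : I -> M -> M) : tr (fun z => \sum_i F i z) = \sum_i tr (F i).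
Proof. by rewrite /tr exchange_big; apply: eq_bigr => i _; rewrite mulr_suml. Qed.

Lemma tr_sub F G : tr (fun z => F z - G z) = tr F - tr G.
Proof. by rewrite /tr -sumrB; apply: eq_bigr => i _; rewrite mulrBl. Qed.

Lemma tr_cmul c F : tr (fun z => c * F z) = c * tr F.
Proof. by rewrite /tr mulr_sumr; apply: eq_bigr => i _; rewrite mulrA. Qed.

Lemma tr_lmul f m : rmodmap f -> tr (f \o lmul m) = tr f * m.
Proof.
move=> Hf; rewrite /tr /=.
transitivity (\sum_(j < n) \sum_(l < n) f (x l) * E (y l * (m * x j)) * y j).
  by apply: eq_bigr => j _; rewrite /lmul (rmod_expand _ Hf) mulr_suml.
rewrite exchange_big /= mulr_suml; apply: eq_bigr => l _.
by rewrite -mulrA -(Hqb1 (y l * m)) mulr_sumr; apply: eq_bigr => j _; rewrite !mulrA.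
Qed.

Lemma tr_lmulE w : tr (lmul w \o E) = w.
Proof.
by rewrite /tr /lmul /= -[RHS]mulr1 -sum_Ex_y mulr_sumr; apply: eq_bigr => i _; rewrite mulrA.
Qed.

Lemma tr_compE g : rmodmap g -> tr (g \o E) = g 1.
Proof.
move=> Hg; rewrite /tr /= -[RHS]mulr1 -[X in _ * X]sum_Ex_y mulr_sumr.
apply: eq_bigr => i _.
by rewrite -(mul1r (E (x i))) (rmodMr _ Hg) // mul1r mulrA.
Qed.

(* Multiplied by [lam^-1], both sides give [\sum_(i, j) x i * b (y i * x j) * y j]. *)
Lemma tr_tr' b : bimodmap b -> tr b = tr' b.
Proof.
move=> Hb.
have HC : balanced (fun s t => s * b t).
  split=> [a c t|s a c|s u t Hu]; first by rewrite mulrDl.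
    by rewrite (rmodD _ _ Hb) mulrDr.
  by rewrite (bimodMl _ Hb Hu) mulrA.
have xb m : \sum_(i < n) x i * b (y i * m) = m * tr' b.
  rewrite /tr' mulr_sumr -(casimir_commute HC).
  by apply: eq_bigr => i _; rewrite mulrA.
have bx m : \sum_(j < n) b (m * x j) * y j = tr b * m.
  by rewrite -(tr_lmul _ Hb).
have HT := tr_central Hb; have HT' := tr'_central Hb.
have E1 : \sum_(j < n) \sum_(i < n) x i * b (y i * x j) * y j = tr' b * lam^-1%:A.
  rewrite -Hxy mulr_sumr; apply: eq_bigr => j _.
  by rewrite -mulr_suml xb -(centralC (x j) HT') mulrA.
have E2 : \sum_(j < n) \sum_(i < n) x i * b (y i * x j) * y j = tr b * lam^-1%:A.
  rewrite exchange_big -Hxy mulr_sumr; apply: eq_bigr => i _.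
  rewrite [RHS]mulrA (centralC (x i) HT) -mulrA -bx mulr_sumr.
  by apply: eq_bigr => j _; rewrite !mulrA.
have := congr1 (fun v => v * lam%:A) (etrans (esym E1) E2).
by rewrite -!mulrA !mulr_algl scalerA mulVf // scale1r !mulr1 => ->.
Qed.

(** * The tower and the pairing *)

Local Notation EM := (EM x y lam).
Local Notation EM1 := (EM1 E x y lam).
Local Notation inM2 := (inM2 E x y lam).
Local Notation inB := (inB E x y lam).
Local Notation pairing := (pairing E x y lam).
Local Notation e2 := (e2 x y lam).
Local Notation antipodeB := (antipodeB E x y lam).

Lemma EME f : EM f = lam *: tr f.
Proof. by []. Qed.

Lemma qbuE i : qbu E x lam i = lmul (lam^-1 *: x i) \o E.
Proof. by apply: functional_extensionality => z; rewrite /qbu /lmul /= scalerAl. Qed.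

Lemma EM_qbu i : EM (qbu E x lam i) = x i.
Proof. by rewrite qbuE EME tr_lmulE scalerA mulfV // scale1r. Qed.

Lemma EM_E_lmul_adjL d i : EM (E \o (lmul (lam^-1 *: x i) \o d)) = adjL d (x i).
Proof. by rewrite EME -[tr _]/(adjL d (lam^-1 *: x i)) adjLZ scalerA mulfV // scale1r. Qed.

Definition centralizesM (Phi : M2T M) := forall m X, Phi (lmul m \o X) = lmul m \o Phi X.

Lemma inB_centralizesM Phi : inB Phi -> centralizesM Phi.
Proof. by case=> _ H m X; have := congr1 (fun F => F X) (H m). Qed.

Lemma inM2_rmod Phi X : inM2 Phi -> rmodmap (Phi X).
Proof.
case=> q [P [Q [HPQ ->]]]; apply: rmod_fsum => i.
have [/inM1P HP _] := HPQ i.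
split=> [a b|u z Hu]; first by rewrite mulrDr (rmodD _ _ HP).
by rewrite mulrA (rmodMr _ HP).
Qed.

Lemma inM2_comp_lmul Phi X m : inM2 Phi -> rmodmap X ->
  Phi (X \o lmul m) = Phi X \o lmul m.
Proof.
case=> q [P [Q [HPQ ->]]] HX; apply: functional_extensionality => z /=.
apply: eq_bigr => i _; have [_ /inM1P HQ] := HPQ i.
congr (P i _); rewrite /lmul mulrA; congr (_ * z).
have HQX : rmodmap (Q i \o X).
  split=> [a b|u w Hu] /=; first by rewrite (rmodD _ _ HX) (rmodD _ _ HQ).
  by rewrite (rmodMr _ HX Hu) (rmodMr _ HQ Hu).
by rewrite !EME -scalerAl; congr (_ *: _); apply: (tr_lmul m HQX).
Qed.

Lemma inM2_pointwise Phi Y z : inM2 Phi ->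
  Phi Y z = \sum_(j < n) Phi (lmul (Y (x j)) \o E) (y j * z).
Proof.
case=> q [P [Q [HPQ ->]]] /=; rewrite exchange_big /=; apply: eq_bigr => l _.
have [/inM1P HP /inM1P HQ] := HPQ l.
rewrite EME -scalerAl mulr_suml scaler_sumr (rmod_sum _ _ _ HP); apply: eq_bigr => j _.
congr (P l _); rewrite EME /lmul /= -scalerAl -mulrA; congr (_ *: (_ * _)).
rewrite -[LHS]mulr1 -sum_Ex_y mulr_sumr /tr.
by apply: eq_bigr => i _ /=; rewrite (rmodMr _ HQ) // mulrA.
Qed.

Definition Bof (b : M -> M) : M2T M := fun X z => \sum_(i < n) X (x i) * b (y i * z).

Lemma inB_Bof Phi : inB Phi -> Phi = Bof (Phi E).
Proof.
move=> HB; apply: functional_extensionality => Y; apply: functional_extensionality => z.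
rewrite (inM2_pointwise _ _ (proj1 HB)).
by apply: eq_bigr => i _; rewrite (inB_centralizesM HB).
Qed.

Lemma inB_bimod Phi : inB Phi -> bimodmap (Phi E).
Proof.
move=> HB; split; first exact: inM2_rmod (proj1 HB).
move=> u z Hu.
have EuE : lmul u \o E = E \o lmul u.
  by apply: functional_extensionality => w; rewrite /lmul /= HEl.
have := congr1 (fun F => F z) (inB_centralizesM HB u E).
by rewrite EuE (inM2_comp_lmul _ (proj1 HB) E_bimod).
Qed.

Lemma Bof_E b : bimodmap b -> Bof b E = b.
Proof.
move=> Hb; apply: functional_extensionality => z; rewrite /Bof.
rewrite -[in RHS](mul1r z) -sum_Ex_y mulr_suml (rmod_sum _ _ _ Hb).
by apply: eq_bigr => i _; rewrite -mulrA [b (E _ * _)](bimodMl _ Hb).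
Qed.

Lemma Bof_rmod b X : bimodmap b -> rmodmap (Bof b X).
Proof.
move=> Hb; apply: (@rmod_fsum _ (fun i z => X (x i) * b (y i * z))) => i.
split=> [a c|u z Hu]; first by rewrite mulrDr (rmodD _ _ Hb) mulrDr.
by rewrite mulrA (rmodMr _ Hb Hu) mulrA.
Qed.

Lemma Bof_bimod b b' : bimodmap b -> bimodmap b' -> bimodmap (Bof b b').
Proof.
move=> Hb Hb'; split; first exact: Bof_rmod.
move=> u w Hu; rewrite /Bof mulr_sumr.
transitivity (\sum_(i < n) b' (x i) * b (y i * u * w)).
  by apply: eq_bigr => i _; rewrite mulrA.
rewrite -(@casimir_commute (fun s t => b' s * b (t * w))).
  by apply: eq_bigr => i _; rewrite (bimodMl _ Hb') // mulrA.
split=> [a c t|s a c|s v t Hv]; first by rewrite (rmodD _ _ Hb') mulrDl.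
  by rewrite mulrDl (rmodD _ _ Hb) mulrDr.
by rewrite (rmodMr _ Hb' Hv) -[v * t * w]mulrA (bimodMl _ Hb Hv) mulrA.
Qed.

Lemma Bof_inB b : bimodmap b -> inB (Bof b).
Proof.
move=> Hb; split; last first.
  move=> m; apply: functional_extensionality => X; apply: functional_extensionality => z.
  by rewrite /= /iM12 /Bof /lmul /= mulr_sumr; apply: eq_bigr => i _; rewrite mulrA.
have Bof_qbu i w : Bof b (qbu E x lam i) w = lam^-1 *: (x i * b w).
  rewrite /Bof /qbu -[w in b w]mul1r -sum_Ex_y mulr_suml (rmod_sum _ _ _ Hb).
  rewrite mulr_sumr scaler_sumr; apply: eq_bigr => j _.
  by rewrite -[E _ * _ * _]mulrA [b (E _ * _)](bimodMl _ Hb) // mulrA !scalerAl.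
exists n, (fun i => Bof b (qbu E x lam i)), (qbv E y); split.
  move=> i; split; apply/inM1P; first exact: Bof_rmod.
  by split=> [a c|u z Hu]; rewrite /qbv ?mulrDr ?HEadd // mulrA HEr.
apply: functional_extensionality => X; apply: functional_extensionality => z.
transitivity (\sum_(j < n) \sum_(i < n) x i * (E (y i * X (x j)) * b (y j * z))).
  rewrite /Bof; apply: eq_bigr => j _; rewrite -{1}(Hqb2 (X (x j))) mulr_suml.
  by apply: eq_bigr => i _; rewrite mulrA.
rewrite exchange_big /=; apply: eq_bigr => i _; rewrite -mulr_sumr Bof_qbu EME /qbv /=.
rewrite -scalerAl (rmodZ _ _ Hb) -scalerAr scalerA mulVf // scale1r; congr (_ * _).
rewrite mulr_suml (rmod_sum _ _ _ Hb); apply: eq_bigr => j _.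
by rewrite -mulrA [b (E _ * _)](bimodMl _ Hb).
Qed.

Lemma pairingE a Phi : rmodmap a -> centralizesM Phi ->
  pairing a Phi = tr (a \o adjL (Phi E)).
Proof.
move=> Ha HB.
have EM1_Phi : EM1 (iM12 a \o e2 \o iM12 (e1 E) \o Phi) =
    fun z => lam *: \sum_(i < n) a (adjL (Phi E) (x i) * E (y i * z)).
  apply: functional_extensionality => z; rewrite /Defs.EM1; congr (_ *: _).
  apply: eq_bigr => i _.
  by rewrite /= /iM12 /Defs.e2 /e1 /= qbuE HB EM_E_lmul_adjL.
rewrite /Defs.pairing /Fmap EM1_Phi EME.
transitivity (lam ^- 2 *: (lam *: (lam *: tr (a \o adjL (Phi E))))); last first.
  by rewrite !scalerA -expr2 mulVf ?expf_neq0 // scale1r.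
congr (_ *: (_ *: _)); rewrite /tr.
under eq_bigr => j _ do rewrite -scalerAl.
rewrite -scaler_sumr; congr (_ *: _).
under eq_bigr => j _ do rewrite mulr_suml.
rewrite exchange_big; apply: eq_bigr => i _ /=.
under eq_bigr => j _ do rewrite (rmodMr _ Ha) // -mulrA.
by rewrite -mulr_sumr Hqb1.
Qed.

Lemma epsAE a : rmodmap a -> epsA E x y lam a = a 1.
Proof. by move=> Ha; rewrite /epsA pairingE // adjL_E tr_compE. Qed.

Lemma EM1_Phi_e1_e2 Phi : inB Phi ->
  EM1 (Phi \o iM12 (e1 E) \o e2) = fun z => lam *: Phi E z.
Proof.
move=> HB; have HbE := inB_bimod HB.
apply: functional_extensionality => z; rewrite /Defs.EM1; congr (_ *: _).
rewrite (rmod_expand z HbE); apply: eq_bigr => i _.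
rewrite /= /iM12 /Defs.e2 /e1 EM_qbu (inM2_comp_lmul _ (proj1 HB) E_bimod) /= /qbv /lmul.
by rewrite (rmodMr _ HbE).
Qed.

Lemma EM1_e2_e1_Phi Phi : centralizesM Phi -> bimodmap (Phi E) ->
  EM1 (e2 \o iM12 (e1 E) \o Phi) = fun z => lam *: adjL (Phi E) z.
Proof.
move=> HB Hb; apply: functional_extensionality => z; rewrite /Defs.EM1; congr (_ *: _).
rewrite (rmod_expand z (adjL_bimod Hb)); apply: eq_bigr => i _.
by rewrite qbuE /= /iM12 /Defs.e2 /e1 HB EM_E_lmul_adjL /lmul /qbv.
Qed.

Lemma antipodeB_E b t : inB b -> antipodeB b t -> b E = adjL (t E).
Proof.
move=> Hb [Ht Heq]; apply: functional_extensionality => z.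
have := congr1 (fun F => F z) Heq.
rewrite EM1_Phi_e1_e2 // EM1_e2_e1_Phi; [|exact: inB_centralizesM|exact: inB_bimod].
by move/(congr1 (fun v => lam^-1 *: v)); rewrite !scalerA mulVf // !scale1r.
Qed.

Lemma antipodeB_Bof tau : bimodmap tau -> antipodeB (Bof (adjL tau)) (Bof tau).
Proof.
move=> Ht; have Hlt := adjL_bimod Ht.
split; first exact: Bof_inB.
rewrite EM1_Phi_e1_e2; last exact: Bof_inB.
rewrite EM1_e2_e1_Phi; [|exact: inB_centralizesM (Bof_inB Ht)|by rewrite Bof_E].
by rewrite !Bof_E.
Qed.

Lemma adjL_Bof b b' z : bimodmap b -> bimodmap b' ->
  adjL (Bof b b') z = \sum_(i < n) adjL b (z * x i) * adjL b' (y i).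
Proof.
move=> Hb Hb'; apply: E_faithful_r => v.
rewrite E_adjL; last exact: Bof_bimod.
rewrite mulr_suml E_sum /Bof mulr_sumr E_sum.
have -> : \sum_(i < n) E (z * (b' (x i) * b (y i * v))) =
          \sum_(i < n) E (z * x i * b (adjL b' (y i) * v)).
  rewrite -(@balanced_adjL (fun s t => E (z * s * b (t * v)))).
    by apply: eq_bigr => i _; rewrite mulrA.
  split=> [a c t|s a c|s u t Hu]; first by rewrite mulrDr mulrDl HEadd.
    by rewrite mulrDl (rmodD _ _ Hb) mulrDr HEadd.
  by rewrite mulrA -[u * t * v]mulrA (bimodMl _ Hb Hu) mulrA.
by apply: eq_bigr => i _; rewrite -[adjL b _ * _ * v]mulrA (E_adjL _ _ Hb).
Qed.

Lemma tr_adjL_Bof a b b' : bimodmap a -> bimodmap b -> bimodmap b' ->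
  tr (a \o adjL (Bof b b')) =
  \sum_(i < n) \sum_(j < n) a (adjL b (x i) * adjL b' (x j)) * y j * y i.
Proof.
move=> Ha Hb Hb'; have Hlb := adjL_bimod Hb; have Hlb' := adjL_bimod Hb'.
rewrite /tr /=.
transitivity (\sum_(l < n) \sum_(i < n) a (adjL b (x i) * adjL b' (y i * x l)) * y l).
  apply: eq_bigr => l _; rewrite adjL_Bof // -mulr_suml -(rmod_sum _ _ _ Ha).
  congr (a _ * _); rewrite (@casimir_commute (fun s t => adjL b s * adjL b' t)) //.
  split=> [s c t|s c t|s u t Hu]; first by rewrite (rmodD _ _ Hlb) mulrDl.
    by rewrite (rmodD _ _ Hlb') mulrDr.
  by rewrite (rmodMr _ Hlb Hu) (bimodMl _ Hlb' Hu) mulrA.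
rewrite exchange_big /=; apply: eq_bigr => i _.
transitivity (\sum_(l < n) \sum_(j < n)
    a (adjL b (x i) * adjL b' (x j)) * E (y j * y i * x l) * y l).
  apply: eq_bigr => l _; rewrite (rmod_expand (y i * x l) Hlb') mulr_sumr.
  rewrite (rmod_sum _ _ _ Ha) mulr_suml.
  by apply: eq_bigr => j _; rewrite mulrA (rmodMr _ Ha) // !mulrA.
rewrite exchange_big; apply: eq_bigr => j _.
transitivity (a (adjL b (x i) * adjL b' (x j)) * \sum_(l < n) E (y j * y i * x l) * y l).
  by rewrite [in RHS]mulr_sumr; apply: eq_bigr => l _; rewrite !mulrA.
by rewrite Hqb1 !mulrA.
Qed.

Lemma pairing_split a q (a1 a2 : 'I_q -> M -> M) b b' : bimodmap a ->
  (forall i, bimodmap (a1 i) /\ bimodmap (a2 i)) ->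
  (forall u v, a (u * v) = \sum_(i < q) a1 i u * a2 i v) -> inB b -> inB b' ->
  \sum_(i < q) pairing (a1 i) b * pairing (a2 i) b' = pairing a (b \o b').
Proof.
move=> Ha H12 Hsplit Hb Hb'.
have HbE := inB_bimod Hb; have Hb'E := inB_bimod Hb'.
have HBB' : centralizesM (b \o b').
  by move=> m X; rewrite /= !inB_centralizesM.
rewrite (pairingE Ha HBB') /=.
have -> : b (b' E) = Bof (b E) (b' E) := congr1 (fun F => F (b' E)) (inB_Bof Hb).
rewrite tr_adjL_Bof //.
transitivity (\sum_(i < q) \sum_(l < n) \sum_(j < n)
    a1 i (adjL (b E) (x l)) * a2 i (adjL (b' E) (x j)) * y j * y l).
  apply: eq_bigr => i _; have [H1 H2] := H12 i.
  rewrite (pairingE H1 (inB_centralizesM Hb)) (pairingE H2 (inB_centralizesM Hb')).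
  rewrite {1}/tr mulr_suml; apply: eq_bigr => l _.
  have Hc : central (tr (a2 i \o adjL (b' E))).
    by apply: tr_central; apply: bimod_comp => //; exact: adjL_bimod.
  rewrite -mulrA -(centralC _ Hc) mulrA /tr mulr_sumr mulr_suml; apply: eq_bigr => j _.
  by rewrite /= !mulrA.
rewrite exchange_big /=; apply: eq_bigr => l _; rewrite exchange_big /=; apply: eq_bigr => j _.
by rewrite -!mulr_suml -Hsplit.
Qed.

Lemma antipodeA_tr a s W : bimodmap a -> antipodeA N E x y lam a s -> bimodmap W ->
  tr (s \o W) = tr (a \o adjR W).
Proof.
move=> Ha [/inAP Hs Hpair] HW.
have HW2 := adjR_bimod (adjR_bimod HW).
have := Hpair _ _ (Bof_inB (adjL_bimod HW2)) (antipodeB_Bof HW2).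
rewrite (pairingE Hs (inB_centralizesM (Bof_inB (adjL_bimod HW2)))).
rewrite (pairingE Ha (inB_centralizesM (Bof_inB HW2))) !Bof_E //; last exact: adjL_bimod.
by rewrite !adjL_adjR //; exact: adjR_bimod.
Qed.

(** * The coproduct of A from a basis of M_2 over M_1 *)

Section BasisB.
Variables (nB : nat) (h : 'I_nB -> M2T M).
Hypothesis h_inB : forall i, inB (h i).
Hypothesis h_span : forall Phi, inM2 Phi -> exists c : 'I_nB -> M1T M,
  (forall i, inM1 E (c i)) /\ Phi = fun X z => \sum_(i < nB) h i (c i \o X) z.
Hypothesis h_free : forall c c' : 'I_nB -> M1T M,
  (forall i, inM1 E (c i) /\ inM1 E (c' i)) ->
  (fun X z => \sum_(i < nB) h i (c i \o X) z) =
  (fun X z => \sum_(i < nB) h i (c' i \o X) z) -> forall i, c i = c' i.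

Definition eta i := h i E.

Lemma eta_bimod i : bimodmap (eta i).
Proof. exact: inB_bimod. Qed.

Lemma eta_free (Z : 'I_nB -> M -> M) : (forall i, rmodmap (Z i)) ->
  (forall q r, \sum_(i < nB) Z i q * eta i r = 0) -> forall i q, Z i q = 0.
Proof.
move=> HZ Z0 i q.
have zero_rmod : rmodmap (fun _ : M => 0).
  by split=> [a b|u z Hu]; rewrite ?addr0 ?mul0r.
have -> // := congr1 (fun f => f q) (@h_free Z (fun _ _ => 0) _ _ i).
  by move=> j; split; apply/inM1P.
apply: functional_extensionality => X; apply: functional_extensionality => z.
under eq_bigr => j _ do rewrite (inB_Bof (h_inB j)).
under [RHS]eq_bigr => j _ do rewrite (inB_Bof (h_inB j)).
rewrite /Bof exchange_big /= big1; last by move=> l _; apply: Z0.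
by rewrite big1 // => j _; rewrite big1 // => l _; rewrite mul0r.
Qed.

(* [D] splits [a] along the basis: in Sweedler notation [D i = a_(1)] when [eta i = a_(2)]. *)
Definition eta_split (a : M -> M) (D : 'I_nB -> M -> M) :=
  (forall i, bimodmap (D i)) /\ forall q r, a (q * r) = \sum_(i < nB) D i q * eta i r.

Lemma eta_split_unique a D D' : (forall i, rmodmap (D i)) -> (forall i, rmodmap (D' i)) ->
  (forall q r, a (q * r) = \sum_(i < nB) D i q * eta i r) ->
  (forall q r, a (q * r) = \sum_(i < nB) D' i q * eta i r) -> forall i q, D i q = D' i q.
Proof.
move=> HD HD' Ha Ha' i q; apply/eqP; rewrite -subr_eq0; apply/eqP.
apply: (@eta_free (fun i q => D i q - D' i q)) => [j|q' r].
  split=> [s t|u z Hu]; first by rewrite (rmodD _ _ (HD j)) (rmodD _ _ (HD' j)) opprD addrACA.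
  by rewrite mulrBl (rmodMr _ (HD j) Hu) (rmodMr _ (HD' j) Hu).
by under eq_bigr => j _ do rewrite mulrBl; rewrite sumrB -Ha -Ha' subrr.
Qed.

(* The map [X |-> a o lmul (E_M X)] lies in [M_2]; its coordinates in the basis [h] split [a]. *)
Lemma rmod_split_exists a : bimodmap a -> exists D : 'I_nB -> M -> M,
  (forall i, rmodmap (D i)) /\ forall q r, a (q * r) = \sum_(i < nB) D i q * eta i r.
Proof.
move=> Ha.
have HPhi : inM2 (fun X z => a (EM X * z)).
  exists 1%N, (fun _ => a), (fun _ => id); split.
    by move=> _; split; apply/inM1P; [case: Ha|case: id_bimod].
  by apply: functional_extensionality => X; apply: functional_extensionality => z; rewrite big_ord1.
have [c [Hc HPhi_c]] := h_span HPhi.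
have lam_split q r : lam *: a (q * r) = \sum_(i < nB) c i q * eta i r.
  have := congr1 (fun F => F (lmul q \o E) r) HPhi_c => /=.
  rewrite EME tr_lmulE -scalerAl (rmodZ _ _ Ha) => ->.
  apply: eq_bigr => i _; rewrite (inB_Bof (h_inB i)) -/(eta i) /Bof.
  have /inM1P Hci := Hc i.
  rewrite -[in RHS](mul1r r) -sum_Ex_y mulr_suml (rmod_sum _ _ _ (eta_bimod i)) mulr_sumr.
  apply: eq_bigr => l _; rewrite /lmul /= (rmodMr _ Hci) // -!mulrA.
  by rewrite [eta i (E _ * _)](bimodMl _ (eta_bimod i)).
exists (fun i q => lam^-1 *: c i q); split.
  move=> i; have /inM1P Hci := Hc i.
  by split=> [s t|u z Hu]; rewrite ?(rmodD _ _ Hci) ?scalerDr // (rmodMr _ Hci) // scalerAl.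
move=> q r; rewrite -[LHS]scale1r -(mulVf Hlam) -scalerA lam_split scaler_sumr.
by apply: eq_bigr => i _; rewrite scalerAl.
Qed.

Lemma eta_split_exists a : bimodmap a -> exists D, eta_split a D.
Proof.
move=> Ha; have [D [HD Hsplit]] := rmod_split_exists Ha.
exists D; split => // i; split => // u q Hu.
have := @eta_split_unique (fun z => a (u * z)) (fun i z => D i (u * z)) (fun i z => u * D i z).
move=> /(_ _ _ _ _ i q) -> //.
- move=> j; split=> [s t|v z Hv]; first by rewrite mulrDr (rmodD _ _ (HD j)).
  by rewrite mulrA (rmodMr _ (HD j)).
- move=> j; split=> [s t|v z Hv]; first by rewrite (rmodD _ _ (HD j)) mulrDr.
  by rewrite (rmodMr _ (HD j)) // mulrA.
- by move=> s t; rewrite mulrA Hsplit.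
- move=> s t; rewrite (bimodMl _ Ha Hu) Hsplit mulr_sumr.
  by apply: eq_bigr => j _; rewrite mulrA.
Qed.

Definition cop (a : M -> M) : 'I_nB -> M -> M :=
  epsilon (inhabits (fun (_ : 'I_nB) (_ : M) => (0 : M))) (eta_split a).

Lemma cop_spec a : bimodmap a -> eta_split a (cop a).
Proof. by move=> Ha; apply: epsilon_spec; exact: eta_split_exists. Qed.

Lemma cop_bimod a i : bimodmap a -> bimodmap (cop a i).
Proof. by move=> /cop_spec []. Qed.

Lemma cop_split a q r : bimodmap a -> a (q * r) = \sum_(i < nB) cop a i q * eta i r.
Proof. by move=> /cop_spec [_ ->]. Qed.

Lemma cop_of_split a D : bimodmap a -> (forall i, rmodmap (D i)) ->
  (forall q r, a (q * r) = \sum_(i < nB) D i q * eta i r) -> forall i q, D i q = cop a i q.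
Proof.
move=> Ha HD Hsplit; apply: eta_split_unique => // [i|q r]; last exact: cop_split.
exact: cop_bimod.
Qed.

Definition kap i := cop E i.

Lemma kap_bimod i : bimodmap (kap i).
Proof. exact: cop_bimod E_bimod. Qed.

Lemma bimod_eta_expand g z : bimodmap g ->
  g z = \sum_(i < nB) conv g (kap i) * eta i z.
Proof.
move=> Hg; rewrite (rmod_expand z Hg).
transitivity (\sum_(j < n) \sum_(i < nB) g (x j) * kap i (y j) * eta i z).
  by apply: eq_bigr => j _; rewrite (cop_split _ _ E_bimod) mulr_sumr; apply: eq_bigr => i _; rewrite mulrA.
by rewrite exchange_big; apply: eq_bigr => i _; rewrite /conv mulr_suml.
Qed.

Lemma conv_tr_adjR g d : bimodmap g -> bimodmap d -> conv g d = tr (g \o adjR d).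
Proof.
move=> Hg Hd; rewrite /tr /conv /adjR /=; symmetry.
transitivity (\sum_(i < n) \sum_(j < n) g (x j) * E (d (y j) * x i) * y i).
  apply: eq_bigr => i _; rewrite (rmod_sum _ _ _ Hg) mulr_suml.
  by apply: eq_bigr => j _; rewrite (rmodMr _ Hg).
rewrite exchange_big; apply: eq_bigr => j _.
by rewrite -[in RHS](Hqb1 (d (y j))) mulr_sumr; apply: eq_bigr => i _; rewrite !mulrA.
Qed.

Lemma conv_pairing g d : bimodmap g -> bimodmap d ->
  conv g d = pairing g (Bof (adjR (adjR d))).
Proof.
move=> Hg Hd; have Hd2 := adjR_bimod (adjR_bimod Hd).
rewrite (pairingE Hg (inB_centralizesM (Bof_inB Hd2))) Bof_E // adjL_adjR.
  exact: conv_tr_adjR.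
exact: adjR_bimod.
Qed.

Lemma tr_nondeg Z : bimodmap Z -> (forall d, bimodmap d -> tr (Z \o d) = 0) -> Z = fun _ => 0.
Proof.
move=> HZ Z0; apply: functional_extensionality => z.
rewrite (bimod_eta_expand z HZ) big1 // => i _.
have Hk := kap_bimod i.
by rewrite conv_tr_adjR // Z0 ?mul0r //; exact: adjR_bimod.
Qed.

Lemma sum_split_conv q (a1 a2 : 'I_q -> M -> M) u v :
  (forall i, bimodmap (a1 i) /\ bimodmap (a2 i)) ->
  \sum_(i < q) a1 i u * a2 i v =
  \sum_(r < nB) \sum_(r' < nB)
    (\sum_(i < q) conv (a1 i) (kap r) * conv (a2 i) (kap r')) * (eta r u * eta r' v).
Proof.
move=> H12.
transitivity (\sum_(i < q) \sum_(r < nB) \sum_(r' < nB)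
    conv (a1 i) (kap r) * conv (a2 i) (kap r') * (eta r u * eta r' v)).
  apply: eq_bigr => i _; have [H1 H2] := H12 i.
  rewrite (bimod_eta_expand u H1) (bimod_eta_expand v H2) mulr_suml.
  apply: eq_bigr => r _; rewrite mulr_sumr; apply: eq_bigr => r' _.
  have Hc : central (conv (a2 i) (kap r')) by apply: conv_central => //; exact: kap_bimod.
  by rewrite -!mulrA; congr (_ * _); rewrite !mulrA (centralC _ Hc).
rewrite exchange_big; apply: eq_bigr => r _; rewrite exchange_big; apply: eq_bigr => r' _.
by rewrite mulr_suml.
Qed.

(* A coproduct in the sense of the pairing is an honest splitting of [a (u * v)]: test both
   sides against the basis of [B ⊗ B] given by the elements [Bof (adjR (adjR (kap r)))]. *)
Lemma coprodA_split a q (a1 a2 : 'I_q -> M -> M) : bimodmap a ->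
  coprodA N E x y lam a a1 a2 -> forall u v, a (u * v) = \sum_(i < q) a1 i u * a2 i v.
Proof.
move=> Ha [H12 Hpair] u v.
have H12' i : bimodmap (a1 i) /\ bimodmap (a2 i).
  by have [/inAP ? /inAP ?] := H12 i.
have Hcop i : bimodmap (cop a i) /\ bimodmap (eta i).
  by split; [exact: cop_bimod | exact: eta_bimod].
pose Bk r := Bof (adjR (adjR (kap r))).
have Bk_inB r : inB (Bk r) by apply/Bof_inB/adjR_bimod/adjR_bimod/kap_bimod.
rewrite (cop_split _ _ Ha) (sum_split_conv _ _ Hcop) (sum_split_conv _ _ H12').
apply: eq_bigr => r _; apply: eq_bigr => r' _; congr (_ * _).
have Hkr := kap_bimod r; have Hkr' := kap_bimod r'.
transitivity (\sum_(i < q) pairing (a1 i) (Bk r) * pairing (a2 i) (Bk r')); last first.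
  by apply: eq_bigr => i _; have [? ?] := H12' i; rewrite !conv_pairing.
rewrite Hpair // -(@pairing_split a nB (cop a) eta) //.
  by apply: eq_bigr => i _; have [? ?] := Hcop i; rewrite !conv_pairing.
by move=> u' v'; apply: cop_split.
Qed.

Lemma coprodA_cop a : bimodmap a -> coprodA N E x y lam a (cop a) eta.
Proof.
move=> Ha; split=> [i|b b' Hb Hb']; first by split; apply/inAP; [exact: cop_bimod|exact: eta_bimod].
apply: pairing_split => // [i|u v]; last exact: cop_split.
by split; [exact: cop_bimod | exact: eta_bimod].
Qed.

Lemma cop_of_sum_split a q (X Y : 'I_q -> M -> M) : bimodmap a ->
  (forall l, bimodmap (X l) /\ bimodmap (Y l)) ->
  (forall u v, a (u * v) = \sum_(l < q) X l u * Y l v) ->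
  forall r z, \sum_(l < q) conv (Y l) (kap r) * X l z = cop a r z.
Proof.
move=> Ha HXY Hsplit.
apply: (cop_of_split Ha) => [r|u v].
  apply: rmod_fsum => l; have [HX _] := HXY l.
  by split=> [s t|w z Hw]; rewrite ?(rmodD _ _ HX) ?mulrDr // (rmodMr _ HX Hw) mulrA.
rewrite Hsplit.
transitivity (\sum_(l < q) \sum_(r < nB) conv (Y l) (kap r) * X l u * eta r v).
  apply: eq_bigr => l _; have [HX HY] := HXY l.
  rewrite (bimod_eta_expand v HY) mulr_sumr; apply: eq_bigr => r _.
  by rewrite mulrA (centralC _ (conv_central HY (kap_bimod r))).
by rewrite exchange_big; apply: eq_bigr => r _; rewrite mulr_suml.
Qed.

Lemma cop_coassoc a i p q : bimodmap a ->
  cop a i (p * q) = \sum_(j < nB) cop a j p * cop (eta j) i q.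
Proof.
move=> Ha; have Hcop j := cop_bimod j Ha.
apply/eqP; rewrite -subr_eq0; apply/eqP; move: i q.
apply: (@eta_free (fun i q => cop a i (p * q) - \sum_(j < nB) cop a j p * cop (eta j) i q)).
  move=> i; split=> [s t|u w Hu].
    rewrite mulrDr (rmodD _ _ (Hcop i)) -addrACA -opprD -big_split.
    by congr (_ - _); apply: eq_bigr => j _; rewrite (rmodD _ _ (cop_bimod i (eta_bimod j))) mulrDr.
  rewrite mulrBl mulrA (rmodMr _ (Hcop i) Hu) mulr_suml; congr (_ - _).
  by apply: eq_bigr => j _; rewrite (rmodMr _ (cop_bimod i (eta_bimod j)) Hu) mulrA.
move=> q r; under eq_bigr => i _ do rewrite mulrBl.
rewrite sumrB -(cop_split _ _ Ha) -mulrA (cop_split _ _ Ha).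
apply/eqP; rewrite subr_eq0; apply/eqP.
transitivity (\sum_(j < nB) cop a j p * \sum_(i < nB) cop (eta j) i q * eta i r).
  by apply: eq_bigr => j _; rewrite -(cop_split _ _ (eta_bimod j)).
under eq_bigr => j _ do rewrite mulr_sumr.
rewrite exchange_big; apply: eq_bigr => i _; rewrite mulr_suml; apply: eq_bigr => j _.
by rewrite mulrA.
Qed.

(** * The antipode of A from a basis of M_1 over M *)

Section BasisA.
Variables (nA : nat) (g : 'I_nA -> M -> M).
Hypothesis g_inA : forall i, inA N E (g i).
Hypothesis g_span : forall X, inM1 E X ->
  exists c : 'I_nA -> M, X = fun z => \sum_(i < nA) g i (c i * z).
Hypothesis g_free : forall c c' : 'I_nA -> M,
  (fun z => \sum_(i < nA) g i (c i * z)) = (fun z => \sum_(i < nA) g i (c' i * z)) ->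
  forall i, c i = c' i.

Lemma g_bimod i : bimodmap (g i).
Proof. exact/inAP. Qed.

Definition coord (X : M -> M) : 'I_nA -> M :=
  epsilon (inhabits (fun _ : 'I_nA => (0 : M)))
    (fun c => X = fun z => \sum_(i < nA) g i (c i * z)).

Lemma coord_spec X z : rmodmap X -> X z = \sum_(i < nA) g i (coord X i * z).
Proof.
move=> /inM1P /g_span HX.
by have /(congr1 (fun F => F z)) := epsilon_spec (inhabits (fun _ : 'I_nA => (0 : M))) _ HX.
Qed.

Lemma coord_unique X c i : rmodmap X ->
  (forall z, X z = \sum_(j < nA) g j (c j * z)) -> coord X i = c i.
Proof.
move=> HX HXc; apply: g_free; apply: functional_extensionality => z.
by rewrite -HXc -coord_spec.
Qed.

Definition gcoef (c : M -> M) i q := coord (lmul q \o c) i.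

Lemma gcoef_spec c q r : bimodmap c -> q * c r = \sum_(i < nA) g i (gcoef c i q * r).
Proof. by move=> Hc; rewrite /gcoef -(coord_spec r (rmod_lmul q Hc)). Qed.

Lemma gcoef_bimod c i : bimodmap c -> bimodmap (gcoef c i).
Proof.
move=> Hc; have HcM q := rmod_lmul q Hc.
split; [split=> [a b|u a Hu]|move=> u a Hu]; rewrite /gcoef.
- rewrite (@coord_unique _ (fun j => gcoef c j a + gcoef c j b)) // => z.
  rewrite /lmul /= mulrDl !gcoef_spec // -big_split; apply: eq_bigr => j _.
  by rewrite mulrDl (rmodD _ _ (g_bimod j)).
- rewrite (@coord_unique _ (fun j => gcoef c j a * u)) // => z.
  rewrite /lmul /= -mulrA -(bimodMl _ Hc Hu) (gcoef_spec a (u * z) Hc).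
  by apply: eq_bigr => j _; rewrite mulrA.
- rewrite (@coord_unique _ (fun j => u * gcoef c j a)) // => z.
  rewrite /lmul /= -mulrA (gcoef_spec a z Hc) mulr_sumr; apply: eq_bigr => j _.
  by rewrite -(bimodMl _ (g_bimod j) Hu) mulrA.
Qed.

Lemma adjL_gcoef c p w : bimodmap c ->
  adjL c (p * w) = \sum_(i < nA) adjL (g i) p * gcoef c i w.
Proof.
move=> Hc; apply: E_faithful_r => v; rewrite E_adjL // mulr_suml E_sum.
rewrite -mulrA (gcoef_spec _ _ Hc) mulr_sumr E_sum; apply: eq_bigr => i _.
by rewrite -mulrA (E_adjL _ _ (g_bimod i)).
Qed.

Definition gdual i := gcoef E i.

Lemma gdual_bimod i : bimodmap (gdual i).
Proof. exact: gcoef_bimod E_bimod. Qed.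

Lemma bimod_g_expand f z : bimodmap f ->
  f z = \sum_(i < nA) tr (gdual i \o f) * g i z.
Proof.
move=> Hf; rewrite (rmod_expand z Hf).
transitivity (\sum_(l < n) \sum_(i < nA) g i (gdual i (f (x l)) * (y l * z))).
  by apply: eq_bigr => l _; rewrite gcoef_spec //; exact: E_bimod.
rewrite exchange_big; apply: eq_bigr => i _.
have Hc : central (tr (gdual i \o f)) by apply/tr_central/bimod_comp/Hf/gdual_bimod.
rewrite -(rmod_sum _ _ _ (g_bimod i)) -(bimodCl _ (g_bimod i) Hc); congr (g i _).
by rewrite /tr mulr_suml; apply: eq_bigr => l _; rewrite mulrA.
Qed.

Definition antipode (f : M -> M) z := \sum_(i < nA) tr (f \o adjR (g i)) * gdual i z.

Lemma antipode_coef_central f i : bimodmap f -> central (tr (f \o adjR (g i))).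
Proof. by move=> Hf; apply/tr_central/bimod_comp/adjR_bimod/g_bimod. Qed.

Lemma antipode_bimod f : bimodmap f -> bimodmap (antipode f).
Proof.
move=> Hf; apply: bimod_fsum => i.
by apply: bimod_cmul; [exact: antipode_coef_central | exact: gdual_bimod].
Qed.

(* Through [pairingE] this is [<S a, b> = <a, S b>]. *)
Lemma tr_antipode f W : bimodmap f -> bimodmap W -> tr (antipode f \o W) = tr (f \o adjR W).
Proof.
move=> Hf HW.
have Hc i : central (tr (gdual i \o W)) by apply/tr_central/bimod_comp/HW/gdual_bimod.
transitivity (\sum_(i < nA) tr (f \o adjR (g i)) * tr (gdual i \o W)).
  by rewrite /antipode /= tr_sum; apply: eq_bigr => i _; rewrite tr_cmul.
transitivity (tr (fun v => \sum_(i < nA) tr (gdual i \o W) * f (adjR (g i) v))); last first.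
  congr tr; apply: functional_extensionality => v /=.
  rewrite [in RHS](_ : W = fun z => \sum_(i < nA) tr (gdual i \o W) * g i z); last first.
    by apply: functional_extensionality => z; exact: bimod_g_expand.
  rewrite adjR_cmul // (rmod_sum _ _ _ Hf).
  by apply: eq_bigr => i _; rewrite (bimodCl _ Hf (Hc i)).
rewrite tr_sum; apply: eq_bigr => i _; rewrite tr_cmul (centralC _ (antipode_coef_central i Hf)).
by congr (_ * _); congr tr; apply: functional_extensionality => v /=; rewrite (bimodCl _ Hf (Hc i)).
Qed.

Lemma antipode_at1 f : bimodmap f -> antipode f 1 = f 1.
Proof.
move=> Hf; rewrite -tr_compE; last by case: (antipode_bimod Hf).
by rewrite (tr_antipode Hf E_bimod) adjR_E (tr_compE Hf).
Qed.

Lemma antipode_eta_expand f z : bimodmap f ->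
  antipode f z = \sum_(r < nB) conv f (kap r) * antipode (eta r) z.
Proof.
move=> Hf; rewrite /antipode.
transitivity (\sum_(i < nA) \sum_(r < nB)
    conv f (kap r) * tr (eta r \o adjR (g i)) * gdual i z).
  apply: eq_bigr => i _; rewrite -mulr_suml; congr (_ * _).
  have -> : f \o adjR (g i) = fun v => \sum_(r < nB) conv f (kap r) * eta r (adjR (g i) v).
    by apply: functional_extensionality => v; rewrite /= -bimod_eta_expand.
  rewrite tr_sum; apply: eq_bigr => r _; exact: tr_cmul.
rewrite exchange_big; apply: eq_bigr => r _; rewrite mulr_sumr; apply: eq_bigr => i _.
by rewrite mulrA.
Qed.

Lemma antipode_cop_counit f z : bimodmap f ->
  \sum_(r < nB) antipode (cop f r) (eta r z) = f 1 * z.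
Proof.
move=> Hf; have Hc := central_at1 Hf.
have HSc r : bimodmap (antipode (cop f r)) by apply/antipode_bimod/cop_bimod.
pose Z z := \sum_(r < nB) antipode (cop f r) (eta r z) - f 1 * z.
have HZ : bimodmap Z.
  apply: bimod_sub; last by apply: bimod_cmul => //; exact: id_bimod.
  by apply: bimod_fsum => r; apply: bimod_comp => //; exact: eta_bimod.
suff /(congr1 (fun F => F z)) /eqP : Z = fun _ => 0 by rewrite subr_eq0 => /eqP.
apply: tr_nondeg => // d Hd.
have Hed r : bimodmap (eta r \o d) by apply: bimod_comp => //; exact: eta_bimod.
have conv_cop : \sum_(r < nB) conv (cop f r) (eta r \o d) = f 1 * tr' d.
  rewrite /conv exchange_big /= -(rmodCr _ Hf (tr'_central Hd)) mul1r /tr'.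
  by rewrite (rmod_sum _ _ _ Hf); apply: eq_bigr => j _; rewrite (cop_split _ _ Hf).
rewrite /Z tr_sub tr_sum tr_cmul tr_tr' // -conv_cop; apply/eqP; rewrite subr_eq0; apply/eqP.
apply: eq_bigr => r _; rewrite (tr_antipode (cop_bimod r Hf) (Hed r)).
by rewrite conv_tr_adjR //; exact: cop_bimod.
Qed.

(* [idS a] is [a_(1) o S (a_(2))] in Sweedler notation. *)
Definition idS (f : M -> M) z := \sum_(r < nB) cop f r (antipode (eta r) z).

Lemma idS_bimod f : bimodmap f -> bimodmap (idS f).
Proof.
move=> Hf; apply: bimod_fsum => r; apply: bimod_comp; first exact: cop_bimod.
by apply: antipode_bimod; exact: eta_bimod.
Qed.

Lemma idS_split f q (X Y : 'I_q -> M -> M) z : bimodmap f ->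
  (forall l, bimodmap (X l) /\ bimodmap (Y l)) ->
  (forall u v, f (u * v) = \sum_(l < q) X l u * Y l v) ->
  \sum_(l < q) X l (antipode (Y l) z) = idS f z.
Proof.
move=> Hf HXY Hsplit; rewrite /idS.
transitivity (\sum_(l < q) \sum_(r < nB) conv (Y l) (kap r) * X l (antipode (eta r) z)).
  apply: eq_bigr => l _; have [HX HY] := HXY l.
  rewrite (antipode_eta_expand z HY) (rmod_sum _ _ _ HX); apply: eq_bigr => r _.
  by rewrite (bimodCl _ HX (conv_central HY (kap_bimod r))).
by rewrite exchange_big; apply: eq_bigr => r _; rewrite -(cop_of_sum_split Hf HXY Hsplit).
Qed.

Lemma idS_cop f z : bimodmap f -> \sum_(r < nB) idS (cop f r) (eta r z) = f z.
Proof.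
move=> Hf.
transitivity (\sum_(r < nB) \sum_(j < nB) cop f j (antipode (cop (eta j) r) (eta r z))).
  apply: eq_bigr => r _; symmetry; apply: (idS_split _ (cop_bimod r Hf)).
    by move=> j; split; [exact: cop_bimod | exact: cop_bimod (eta_bimod j)].
  by move=> u v; apply: cop_coassoc.
rewrite exchange_big /= -[z in RHS]mulr1 (cop_split _ _ Hf); apply: eq_bigr => j _.
have Hc := central_at1 (eta_bimod j).
rewrite -(rmod_sum _ _ _ (cop_bimod j Hf)) antipode_cop_counit; last exact: eta_bimod.
by rewrite (bimodCl _ (cop_bimod j Hf) Hc) (centralC _ Hc).
Qed.

Lemma idS_cmul f (I : finType) (c : I -> M) (F : I -> M -> M) z : bimodmap f ->
  (forall i, central (c i) /\ bimodmap (F i)) -> (forall w, f w = \sum_i c i * F i w) ->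
  idS f z = \sum_i c i * idS (F i) z.
Proof.
move=> Hf HcF Hfw.
have cop_cmul r w : cop f r w = \sum_i c i * cop (F i) r w.
  symmetry; apply: (@cop_of_split f (fun r w => \sum_i c i * cop (F i) r w) Hf) => [r'|u v].
    apply: rmod_fsum => i; have [Hc HF] := HcF i; have HFr := cop_bimod r' HF.
    by split=> [a b|u v Hu]; rewrite ?(rmodD _ _ HFr) ?mulrDr // (rmodMr _ HFr Hu) mulrA.
  rewrite Hfw.
  transitivity (\sum_i \sum_(r' < nB) c i * cop (F i) r' u * eta r' v).
    apply: eq_bigr => i _; have [_ HF] := HcF i.
    by rewrite (cop_split _ _ HF) mulr_sumr; apply: eq_bigr => r' _; rewrite mulrA.
  by rewrite exchange_big; apply: eq_bigr => r' _; rewrite mulr_suml.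
rewrite /idS; under eq_bigr => r _ do rewrite cop_cmul.
by rewrite exchange_big; apply: eq_bigr => i _; rewrite mulr_sumr.
Qed.

Lemma g_cancel (X : 'I_nA -> M -> M) : (forall i, bimodmap (X i)) ->
  (forall c, bimodmap c -> forall z, \sum_(i < nA) X i (gcoef c i z) = 0) ->
  forall j q, X j q = 0.
Proof.
move=> HX X0 j q.
pose w r := cop (g j) r q.
have delta_j : forall i, \sum_(r < nB) gcoef (eta r) i (w r) = if i == j then q else 0.
  apply: g_free; apply: functional_extensionality => z.
  transitivity (g j (q * z)); last first.
    rewrite (bigD1 j) //= eqxx big1 ?addr0 // => i /negbTE ->.
    by rewrite mul0r (rmod0 (g_bimod i)).
  rewrite (cop_split _ _ (g_bimod j)).
  transitivity (\sum_(i < nA) \sum_(r < nB) g i (gcoef (eta r) i (w r) * z)).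
    by apply: eq_bigr => i _; rewrite mulr_suml (rmod_sum _ _ _ (g_bimod i)).
  rewrite exchange_big; apply: eq_bigr => r _; rewrite -gcoef_spec //; exact: eta_bimod.
transitivity (\sum_(i < nA) X i (if i == j then q else 0)).
  rewrite (bigD1 j) //= eqxx big1 ?addr0 // => i /negbTE ->.
  exact: rmod0 (HX i).
under eq_bigr => i _ do rewrite -delta_j (rmod_sum _ _ _ (HX i)).
by rewrite exchange_big big1 // => r _; apply: X0; exact: eta_bimod.
Qed.

Lemma idS_adjL_gcoef c z : bimodmap c ->
  \sum_(i < nA) idS (adjL (g i)) (gcoef c i z) = adjL c z.
Proof.
move=> Hc; have Hlc := adjL_bimod Hc; have Hlg i := adjL_bimod (g_bimod i).
have Hgc i : bimodmap (gcoef c i) by exact: gcoef_bimod.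
have Hsplit u v : adjL c (u * v) = \sum_(i < nA) adjL (g i) u * gcoef c i v.
  exact: adjL_gcoef.
transitivity (\sum_(r < nB) idS (cop (adjL c) r) (eta r z)); last exact: idS_cop.
transitivity (\sum_(i < nA) \sum_(r < nB)
    conv (gcoef c i) (kap r) * idS (adjL (g i)) (eta r z)).
  apply: eq_bigr => i _; rewrite (bimod_eta_expand z (Hgc i)).
  rewrite (rmod_sum _ _ _ (idS_bimod (Hlg i))); apply: eq_bigr => r _.
  by rewrite (bimodCl _ (idS_bimod (Hlg i)) (conv_central (Hgc i) (kap_bimod r))).
rewrite exchange_big; apply: eq_bigr => r _; symmetry.
apply: (idS_cmul _ (cop_bimod r Hlc)) => [i|w].
  by split; [exact: conv_central (kap_bimod r) | exact: Hlg].
by rewrite -(cop_of_sum_split Hlc _ Hsplit) // => i; split.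
Qed.

Lemma idS_adjL_g i z : idS (adjL (g i)) z = adjL (g i) 1 * z.
Proof.
have Hlg i' := adjL_bimod (g_bimod i').
apply/eqP; rewrite -subr_eq0; apply/eqP; move: i z.
apply: (@g_cancel (fun i z => idS (adjL (g i)) z - adjL (g i) 1 * z)) => [i|c Hc z].
  apply: bimod_sub; first exact: idS_bimod.
  by apply: bimod_cmul; [exact: central_at1 | exact: id_bimod].
by rewrite sumrB idS_adjL_gcoef // -[z in adjL c z]mul1r adjL_gcoef // subrr.
Qed.

Lemma idS_counit f z : bimodmap f -> idS f z = f 1 * z.
Proof.
move=> Hf; pose c i := tr (gdual i \o adjR f).
have Hc i : central (c i) by apply/tr_central/bimod_comp/adjR_bimod/Hf/gdual_bimod.
have Hf_expand w : f w = \sum_(i < nA) c i * adjL (g i) w.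
  rewrite -[in LHS](adjL_adjR Hf).
  rewrite (_ : adjR f = fun v => \sum_(i < nA) c i * g i v) ?(adjL_cmul _ Hc) //.
  by apply: functional_extensionality => v; apply: bimod_g_expand; exact: adjR_bimod.
rewrite (idS_cmul _ Hf _ Hf_expand) => [|i]; last by split; [exact: Hc|exact/adjL_bimod/g_bimod].
by rewrite Hf_expand mulr_suml; apply: eq_bigr => i _; rewrite idS_adjL_g mulrA.
Qed.

Lemma antipodeA_antipode f : bimodmap f -> antipodeA N E x y lam f (antipode f).
Proof.
move=> Hf; have HSf := antipode_bimod Hf; split; first exact/inAP.
move=> b t Hb Ht; have HbE := inB_bimod Hb.
rewrite (pairingE HSf (inB_centralizesM Hb)) (pairingE Hf (inB_centralizesM (proj1 Ht))).
rewrite (tr_antipode Hf (adjL_bimod HbE)) adjR_adjL //.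
by rewrite (antipodeB_E Hb Ht).
Qed.

Lemma antipodeA_unique a s : bimodmap a -> antipodeA N E x y lam a s -> s = antipode a.
Proof.
move=> Ha Hs; have [/inAP Hs' _] := Hs; have HSa := antipode_bimod Ha.
have Z0 : (fun z => s z - antipode a z) = fun _ => 0.
  apply: tr_nondeg => [|d Hd]; first exact: bimod_sub.
  rewrite (_ : _ \o d = fun z => s (d z) - antipode a (d z)) // tr_sub.
  by rewrite (antipodeA_tr Ha Hs Hd) (tr_antipode Ha Hd) subrr.
apply: functional_extensionality => z; apply/eqP; rewrite -subr_eq0; apply/eqP.
exact: (congr1 (fun F => F z) Z0).
Qed.

Lemma fixedA_in_N m : fixedA N E x y lam m -> m \in N.
Proof.
move=> Hfix; have HE := E_bimod; have HEA : inA N E E by exact/inAP.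
have Hsum : \sum_(r < nB) cop E r (m * antipode (eta r) 1) = m.
  have := Hfix E HEA nB (cop E) eta (coprodA_cop HE) _ (fun r => antipodeA_antipode (eta_bimod r)).
  by move=> /(congr1 (fun F => F 1)) /=; rewrite /lmul mulr1 epsAE // HE1 mul1r.
suff <- : E m = m by [].
rewrite -[RHS]Hsum -[m in E m]mulr1 (cop_split _ _ HE); apply: eq_bigr => r _.
rewrite antipode_at1; last exact: eta_bimod.
by rewrite (rmodCr _ (cop_bimod r HE) (central_at1 (eta_bimod r))).
Qed.

Lemma in_N_fixedA m : m \in N -> fixedA N E x y lam m.
Proof.
move=> Hm a /inAP Ha q a1 a2 Hco s Hs.
have H12 i : bimodmap (a1 i) /\ bimodmap (a2 i).
  by have [/inAP ? /inAP ?] := proj1 Hco i.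
have Hs_eq i : s i = antipode (a2 i) by apply: antipodeA_unique; [case: (H12 i)|].
apply: functional_extensionality => z; rewrite /lmul (epsAE Ha).
transitivity (\sum_(i < q) a1 i (antipode (a2 i) (m * z))).
  apply: eq_bigr => i _; have HS := antipode_bimod (proj2 (H12 i)).
  by rewrite Hs_eq (bimodMl _ HS Hm).
by rewrite (idS_split _ Ha H12 (coprodA_split Ha Hco)) idS_counit // mulrA.
Qed.

Lemma fixedA_iff_in_N m : fixedA N E x y lam m <-> m \in N.
Proof. by split; [exact: fixedA_in_N | exact: in_N_fixedA]. Qed.

End BasisA.
End BasisB.
End Tower.

Theorem lemma6p4 (k : fieldType) (M : algType k) (N : {pred M})
  (E : M -> M) (n : nat) (x y : 'I_n -> M) (lam : k)
  (* N is a k-subalgebra of M *)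
  (HN : subalg_closed N)
  (* E : M -> N is an N-bimodule map *)
  (HEN : forall m, E m \in N)
  (HEadd : forall m m', E (m + m') = E m + E m')
  (HEl : forall u m, u \in N -> E (u * m) = u * E m)
  (HEr : forall u m, u \in N -> E (m * u) = E m * u)
  (* quasi-basis *)
  (Hqb1 : forall m, \sum_(i < n) E (m * x i) * y i = m)
  (Hqb2 : forall m, \sum_(i < n) x i * E (y i * m) = m)
  (* normalisation *)
  (HE1 : E 1 = 1)
  (Hlam : lam != 0)
  (Hxy : \sum_(i < n) x i * y i = lam^-1%:A)
  (* irreducibility: C_M(N) = k1 *)
  (Hirr : forall m : M, (forall u, u \in N -> m * u = u * m) ->
            exists c : k, m = c%:A)
  (* depth 2 *)
  (Hd2 : depth2 N E x y lam) :
  forall m : M, fixedA N E x y lam m <-> m \in N.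
Proof.
have [[nA [g [g_inA [g_span g_free]]]] [nB [h [h_inB [h_span h_free]]]]] := Hd2.
by move=> m; apply: fixedA_iff_in_N.
Qed.
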